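(* Let $F$ be a euclidean field and $B=F[\![X]\!]$. Every quadratic module $Q$ in $B$ is of exactly one of the following forms: (a) $Q=\Phi(F^2,0)$; (b) $Q=B$; (c) $Q=\Phi(F^2,0)\cup\Phi(\epsilon F^2,n)$ for some positive odd integer $n$ and $\epsilon\in\{1,-1\}$; (d) $Q=\Phi(F^2,0)\cup\Phi(F,n)\cup\Phi(F,n+1)$ for some positive integer $n$; (e) $Q=\Phi(F^2,0)\cup\Phi(\epsilon F^2,m)\cup\Phi(F,n)\cup\Phi(F,n+1)$ for some $\epsilon\in\{1,-1\}$, positive odd integer $m$ and positive integer $n$ with $m<n$. In particular, every quadratic module in $F[\![X]\!]$ is a preordering.
   Context: A euclidean field is a formally real field $F$ with $F=F^2\cup(-F^2)$, where $F^2=\{c^2:c\in F\}$; for $\epsilon\in\{\pm1\}$, $\epsilon F^2=\{\epsilon c^2: c\in F\}$. Let $B=F[\![X]\!]$, and for nonzero $f=\sum_{i\ge n}a_iX^i\in B$ with $a_n\ne0$ let $\mathrm{val}(f)=n$ and $\mathrm{an}(f)=a_n$. For a subset $M\subseteq F$ and an integer $n\ge0$, $$\Phi(M,n)=\{x\in B\setminus\{0\}:\ \mathrm{val}(x)\equiv n \pmod 2,\ \mathrm{val}(x)\ge n,\ \mathrm{an}(x)\in M\}\cup\{0\}.$$ A quadratic module in a commutative ring $R$ is a subset $Q$ with $Q+Q\subseteq Q$, $a^2Q\subseteq Q$ for all $a\in R$, and $1\in Q$; a preordering is a quadratic module closed under multiplication. *)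

From HB Require Import structures.
From mathcomp Require Import all_boot all_order all_algebra.
Set Implicit Arguments. Unset Strict Implicit. Unset Printing Implicit Defensive.
Import Order.TTheory GRing.Theory.
Local Open Scope ring_scope.

Definition fps (F : fieldType) := nat -> F.

Definition fps0 (F : fieldType) : fps F := fun _ => 0.
Definition fps1 (F : fieldType) : fps F := fun n => if n == 0%N then 1 else 0.
Definition fpsadd (F : fieldType) (f g : fps F) : fps F := fun n => f n + g n.
Definition fpsmul (F : fieldType) (f g : fps F) : fps F :=
  fun n => \sum_(i < n.+1) f i * g (n - i)%N.

Definition formally_real (F : fieldType) : Prop :=
  forall s : seq F, \sum_(x <- s) x ^+ 2 <> -1.

Definition euclidean (F : fieldType) : Prop :=
  formally_real F /\ forall a : F, exists c : F, a = c ^+ 2 \/ a = - c ^+ 2.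

Definition sqF (F : fieldType) : F -> Prop := fun a => exists c, a = c ^+ 2.
Definition epsSqF (F : fieldType) (eps : F) : F -> Prop :=
  fun a => exists c, a = eps * c ^+ 2.
Definition allF (F : fieldType) : F -> Prop := fun _ => True.

(* x <> 0 has val(x) = k and an(x) = x k *)
Definition has_val (F : fieldType) (x : fps F) (k : nat) : Prop :=
  (forall i, (i < k)%N -> x i = 0) /\ x k <> 0.

Definition Phi (F : fieldType) (M : F -> Prop) (n : nat) : fps F -> Prop :=
  fun x => x = fps0 F \/
    exists k, [/\ has_val x k, odd k = odd n, (n <= k)%N & M (x k)].

Definition quadratic_module (F : fieldType) (Q : fps F -> Prop) : Prop :=
  [/\ forall x y, Q x -> Q y -> Q (fpsadd x y),
      forall a x, Q x -> Q (fpsmul (fpsmul a a) x)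
    & Q (fps1 F)].

Definition preordering (F : fieldType) (Q : fps F -> Prop) : Prop :=
  quadratic_module Q /\ forall x y, Q x -> Q y -> Q (fpsmul x y).

Definition qm_formA (F : fieldType) (Q : fps F -> Prop) : Prop :=
  forall x, Q x <-> Phi (@sqF F) 0 x.
Definition qm_formB (F : fieldType) (Q : fps F -> Prop) : Prop :=
  forall x, Q x.
Definition qm_formC (F : fieldType) (Q : fps F -> Prop) : Prop :=
  exists (n : nat) (eps : F), [/\ (0 < n)%N, odd n, (eps = 1 \/ eps = -1) &
    forall x, Q x <-> Phi (@sqF F) 0 x \/ Phi (epsSqF eps) n x].
Definition qm_formD (F : fieldType) (Q : fps F -> Prop) : Prop :=
  exists n : nat, (0 < n)%N /\
    forall x, Q x <-> [\/ Phi (@sqF F) 0 x, Phi (@allF F) n x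
                        | Phi (@allF F) n.+1 x].
Definition qm_formE (F : fieldType) (Q : fps F -> Prop) : Prop :=
  exists (eps : F) (m n : nat),
    [/\ eps = 1 \/ eps = -1, (0 < m)%N /\ odd m, (0 < n)%N, (m < n)%N &
    forall x, Q x <-> [\/ Phi (@sqF F) 0 x, Phi (epsSqF eps) m x,
                          Phi (@allF F) n x | Phi (@allF F) n.+1 x]].

Definition exactly_one5 (P1 P2 P3 P4 P5 : Prop) : Prop :=
  (P1 \/ P2 \/ P3 \/ P4 \/ P5) /\
  (~ (P1 /\ P2) /\ ~ (P1 /\ P3) /\ ~ (P1 /\ P4) /\ ~ (P1 /\ P5) /\ ~ (P2 /\ P3) /\
   ~ (P2 /\ P4) /\ ~ (P2 /\ P5) /\ ~ (P3 /\ P4) /\ ~ (P3 /\ P5) /\ ~ (P4 /\ P5)).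

From HB Require Import structures.
From mathcomp Require Import all_boot all_order all_algebra.
From mathcomp Require Import boolp ring.
Set Implicit Arguments. Unset Strict Implicit. Unset Printing Implicit Defensive.
Import GRing.Theory.

(* Every nonzero series x of order k factors as x = r^2 * (+-X^k) with r a unit:
   its leading coefficient is +-c^2 (F is euclidean) and the normalised series
   +-x/X^k has constant term c^2, hence a square root since 2 != 0.  So a
   quadratic module Q is determined by its signature, the boolean pattern
   recording which signed monomials +-X^k lie in Q.  Such a pattern is
   "admissible": X^(2j) is in, +-X^k implies +-X^(k+2), and once both X^k and
   -X^k are in, all of X^k * F[[X]] is (g = ((g+1)/2)^2 - ((g-1)/2)^2). *)

(* A pattern [P : bool -> nat -> bool] says for which signs [b]
   ([true] standing for [-1]) and orders [k] the monomial [+-X^k] is allowed.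
   [sq_part] is the pattern of Phi(F^2, 0), [eps_part m e] that of
   Phi(+-F^2, m) for odd [m], and [n <= k] that of Phi(F, n) u Phi(F, n+1). *)
Definition sq_part (b : bool) (k : nat) : bool := ~~ odd k && ~~ b.
Definition eps_part (m : nat) (e b : bool) (k : nat) : bool :=
  [&& odd k, m <= k & b == e].

Definition patternA (b : bool) (k : nat) : bool := sq_part b k.
Definition patternB (b : bool) (k : nat) : bool := true.
Definition patternC m e (b : bool) (k : nat) : bool := sq_part b k || eps_part m e b k.
Definition patternD n (b : bool) (k : nat) : bool := sq_part b k || (n <= k).
Definition patternE m e n (b : bool) (k : nat) : bool :=
  [|| sq_part b k, eps_part m e b k | n <= k].

Definition typeA (S : bool -> nat -> bool) : Prop := S =2 patternA.
Definition typeB (S : bool -> nat -> bool) : Prop := S =2 patternB.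
Definition typeC (S : bool -> nat -> bool) : Prop :=
  exists m e, odd m /\ S =2 patternC m e.
Definition typeD (S : bool -> nat -> bool) : Prop :=
  exists n, 0 < n /\ S =2 patternD n.
Definition typeE (S : bool -> nat -> bool) : Prop :=
  exists m e n, [/\ odd m, m < n & S =2 patternE m e n].

Lemma odd_double_leq n : n <= n.*2.+1 /\ odd n.*2.+1.
Proof. by rewrite /= odd_double -addnn leqW ?leq_addr. Qed.

Lemma types_exclusive (S : bool -> nat -> bool) :
  ~ (typeA S /\ typeB S) /\ ~ (typeA S /\ typeC S) /\ ~ (typeA S /\ typeD S) /\
  ~ (typeA S /\ typeE S) /\ ~ (typeB S /\ typeC S) /\ ~ (typeB S /\ typeD S) /\
  ~ (typeB S /\ typeE S) /\ ~ (typeC S /\ typeD S) /\ ~ (typeC S /\ typeE S) /\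
  ~ (typeD S /\ typeE S).
Proof.
have differ P1 P2 b k : S =2 P1 -> S =2 P2 -> P1 b k != P2 b k -> False.
  by move=> S_P1 S_P2; rewrite -S_P1 -S_P2 eqxx.
rewrite /typeA /typeB /typeC /typeD /typeE.
split; [|split; [|split; [|split; [|split; [|split; [|split; [|split; [|split]]]]]]]].
- by case=> SA SB; apply: (differ _ _ true 0 SA SB).
- case=> SA [m [e [odd_m SC]]]; apply: (differ _ _ e m SA SC).
  by rewrite /patternA /patternC /sq_part /eps_part odd_m leqnn eqxx orbT.
- case=> SA [n [_ SD]]; apply: (differ _ _ true n SA SD).
  by rewrite /patternA /patternD /sq_part leqnn andbF.
- case=> SA [m [e [n [_ _ SE]]]]; apply: (differ _ _ true n SA SE).
  by rewrite /patternA /patternE /sq_part leqnn andbF !orbT.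
- by case=> SB [m [e [_ SC]]]; apply: (differ _ _ true 0 SB SC).
- case=> SB [n [n_gt0 SD]]; apply: (differ _ _ true 0 SB SD).
  by rewrite /patternD /= leqNgt n_gt0.
- case=> SB [m [e [n [_ lt_mn SE]]]]; apply: (differ _ _ true 0 SB SE).
  by rewrite /patternE /= leqNgt (leq_ltn_trans (leq0n m) lt_mn).
- case=> [[m [e [_ SC]]] [n [_ SD]]]; apply: (differ _ _ (~~ e) n.*2.+1 SC SD).
  have [le_n odd_n] := odd_double_leq n.
  rewrite /patternC /patternD /sq_part /eps_part odd_n le_n /=.
  by case: (e); rewrite andbF.
- case=> [[m [e [_ SC]]] [m' [e' [n [_ _ SE]]]]].
  apply: (differ _ _ (~~ e) n.*2.+1 SC SE).
  have [le_n odd_n] := odd_double_leq n.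
  rewrite /patternC /patternE /sq_part /eps_part odd_n le_n !orbT /=.
  by case: (e); rewrite andbF.
- case=> [[n [_ SD]] [m [e [n' [odd_m lt_mn' SE]]]]].
  case: (leqP n m) => [le_nm|lt_mn].
    apply: (differ _ _ (~~ e) m SD SE).
    rewrite /patternD /patternE /sq_part /eps_part odd_m le_nm (leqNgt n' m) lt_mn' /=.
    by case: (e); rewrite andbF.
  apply: (differ _ _ e m SD SE).
  by rewrite /patternD /patternE /sq_part /eps_part odd_m leqnn eqxx leqNgt lt_mn.
Qed.

Lemma below_min (P : pred nat) n k : (forall k', P k' -> n <= k') -> k < n -> ~~ P k.
Proof. by move=> n_min lt_kn; apply: contraTN lt_kn => /n_min; rewrite -leqNgt. Qed.

Section AdmissiblePatterns.
Variable S : bool -> nat -> bool.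
Hypothesis S_even : forall k, ~~ odd k -> S false k.
Hypothesis S_step : forall b k, S b k -> S b k.+2.
Hypothesis S_full : forall k, S false k -> S true k -> forall b k', k <= k' -> S b k'.

Lemma S_le b k k' : k <= k' -> odd k = odd k' -> S b k -> S b k'.
Proof.
move=> le_kk' odd_kk'; rewrite -(subnKC le_kk').
have: ~~ odd (k' - k) by rewrite oddB // odd_kk' addbb.
move: (k' - k) => d /negbTE odd_d S_bk; rewrite -(odd_double_half d) odd_d add0n.
by elim: d./2 => [|j IH]; rewrite ?addn0 // doubleS !addnS S_step.
Qed.

Definition full_level k := S false k && S true k.
Definition odd_hit k := odd k && (S false k || S true k).

Lemma full_levelI b e k : b != e -> S b k -> S e k -> full_level k.
Proof. by rewrite /full_level; case: b; case: e => //= _ -> ->. Qed.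

Lemma S_above n : full_level n -> forall b k, n <= k -> S b k.
Proof. by case/andP=> S_fn S_tn; apply: S_full. Qed.

Lemma S_sq_part b k : ~~ full_level k -> ~~ odd_hit k -> S b k = sq_part b k.
Proof.
rewrite /full_level /odd_hit /sq_part; case: (boolP (odd k)) => [odd_k|even_k] /=.
  by rewrite negb_or => _ /andP[/negbTE S_fk /negbTE S_tk]; case: b.
by rewrite S_even //= => /negbTE S_tk _; case: b => //=; apply: S_even.
Qed.

Lemma S_eps_part m e b k : odd m -> S e m -> (forall k', odd_hit k' -> m <= k') ->
  ~~ full_level k -> S b k = patternC m e b k.
Proof.
move=> odd_m S_em m_min not_full.
have S_e k' : odd k' -> m <= k' -> S e k'.
  by move=> odd_k' le_mk'; apply: S_le le_mk' _ S_em; rewrite odd_m odd_k'.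
have [hit_k|no_hit] := boolP (odd_hit k); last first.
  rewrite /patternC (S_sq_part b not_full no_hit).
  suff -> : eps_part m e b k = false by rewrite orbF.
  apply: contraNF no_hit => /and3P[odd_k le_mk _]; rewrite /odd_hit odd_k.
  by case: (e) (S_e k odd_k le_mk) => ->; rewrite ?orbT.
have [odd_k le_mk] : odd k /\ m <= k by split; [case/andP: hit_k|apply: m_min].
rewrite /patternC /sq_part /eps_part odd_k le_mk /=.
case: (eqVneq b e) => [->|ne_be]; first exact: S_e.
apply/negbTE; apply: contra not_full => S_bk.
exact: full_levelI ne_be S_bk (S_e k odd_k le_mk).
Qed.

Lemma full_types n : full_level n -> (forall k, full_level k -> n <= k) ->
  (forall k, odd_hit k -> n <= k) -> typeB S \/ typeD S.
Proof.
move=> full_n n_min hit_min.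
have below b k : k < n -> S b k = sq_part b k.
  by move=> lt_kn; apply: S_sq_part; apply: below_min lt_kn.
case: (posnP n) => [n0|n_gt0]; [left|right; exists n; split=> //] => b k.
  by apply: (S_above full_n); rewrite n0.
rewrite /patternD; case: (leqP n k) => [le_nk|lt_kn].
  by rewrite orbT (S_above full_n).
by rewrite orbF below.
Qed.

(* Every admissible pattern is of one of the five types, according to whether
   there is an odd hit [m] and a full level [n], and how they compare. *)
Lemma admissible_classification :
  typeA S \/ typeB S \/ typeC S \/ typeD S \/ typeE S.
Proof.
have [hit_ex|no_hit] := pselect (exists k, odd_hit k); last first.
  have hit_never k : ~~ odd_hit k by apply/negP => hit_k; apply: no_hit; exists k.
  have [full_ex|no_full] := pselect (exists k, full_level k); last first.
    left => b k; apply: S_sq_part => //.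
    by apply/negP => full_k; apply: no_full; exists k.
  case: (ex_minnP full_ex) => n full_n n_min.
  have hit_min k : odd_hit k -> n <= k by rewrite (negbTE (hit_never k)).
  by have [?|?] := full_types full_n n_min hit_min; [right; left|do 3 right; left].
case: (ex_minnP hit_ex) => m hit_m m_min.
have odd_m : odd m by case/andP: hit_m.
pose e := ~~ S false m.
have S_em : S e m.
  by move: hit_m; rewrite /odd_hit /e; case S_fm: (S false m) => //= /andP[].
have [full_ex|no_full] := pselect (exists k, full_level k); last first.
  do 2 right; left; exists m, e; split=> // b k.
  by apply: S_eps_part => //; apply/negP => full_k; apply: no_full; exists k.
case: (ex_minnP full_ex) => n full_n n_min.
case: (ltnP m n) => [lt_mn|le_nm]; last first.
  have hit_min k : odd_hit k -> n <= k by move/m_min; apply: leq_trans.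
  by have [?|?] := full_types full_n n_min hit_min; [right; left|do 3 right; left].
do 4 right; exists m, e, n; split=> // b k; rewrite /patternE.
case: (leqP n k) => [le_nk|lt_kn]; first by rewrite !orbT (S_above full_n).
by rewrite (S_eps_part b odd_m S_em m_min (below_min n_min lt_kn)) orbF.
Qed.

Lemma admissible_exactly_one :
  exactly_one5 (typeA S) (typeB S) (typeC S) (typeD S) (typeE S).
Proof. by split; [exact: admissible_classification|exact: types_exclusive]. Qed.

Lemma S_mul b1 b2 k1 k2 : S b1 k1 -> S b2 k2 -> S (b1 (+) b2) (k1 + k2).
Proof.
have even_case b b' k k' : ~~ odd k -> S b k -> S b' k' -> S (b (+) b') (k + k').
  move=> even_k S_bk S_bk'; case: b S_bk => S_bk /=.
    by apply: (S_full (S_even even_k) S_bk); apply: leq_addr.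
  by apply: S_le S_bk'; [apply: leq_addl|rewrite oddD (negbTE even_k)].
move=> S1 S2; case: (boolP (odd k1)) => [odd_k1|even_k1]; last exact: even_case.
case: (boolP (odd k2)) => [odd_k2|even_k2].
  case: (eqVneq b1 b2) => [<-|ne_b12].
    by rewrite addbb S_even // oddD odd_k1 odd_k2.
  have parity : odd k1 = odd k2 by rewrite odd_k1 odd_k2.
  case: (leqP k1 k2) => [le_k12|/ltnW le_k21].
    apply: (S_above (full_levelI ne_b12 (S_le le_k12 parity S1) S2)).
    exact: leq_addl.
  apply: (S_above (full_levelI ne_b12 S1 (S_le le_k21 (esym parity) S2))).
  exact: leq_addr.
by rewrite addbC addnC; apply: even_case.
Qed.

End AdmissiblePatterns.

Local Open Scope ring_scope.

Definition fpsopp (F : fieldType) (f : fps F) : fps F := fun n => - f n.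

Section FpsZmodule.
Variable F : fieldType.

Lemma fpsaddA : associative (@fpsadd F).
Proof. by move=> f g h; apply/funext=> n; rewrite /fpsadd addrA. Qed.

Lemma fpsaddC : commutative (@fpsadd F).
Proof. by move=> f g; apply/funext=> n; rewrite /fpsadd addrC. Qed.

Lemma fpsadd0 : left_id (@fps0 F) (@fpsadd F).
Proof. by move=> f; apply/funext=> n; rewrite /fpsadd /fps0 add0r. Qed.

Lemma fpsaddN : left_inverse (@fps0 F) (@fpsopp F) (@fpsadd F).
Proof. by move=> f; apply/funext=> n; rewrite /fpsadd /fps0 /fpsopp addNr. Qed.

End FpsZmodule.

HB.instance Definition _ (F : fieldType) := Choice.on (fps F).
HB.instance Definition _ (F : fieldType) :=
  GRing.isZmodule.Build (fps F) (@fpsaddA F) (@fpsaddC F) (@fpsadd0 F) (@fpsaddN F).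

Lemma coefM_low (R : nzRingType) n (p p' q q' : {poly R}) :
  (forall i, (i <= n)%N -> p`_i = p'`_i) -> (forall i, (i <= n)%N -> q`_i = q'`_i) ->
  (p * q)`_n = (p' * q')`_n.
Proof.
move=> eq_p eq_q; rewrite !coefM; apply: eq_bigr => i _.
by rewrite eq_p ?eq_q ?leq_subr // -ltnS.
Qed.

(* Multiplicative laws: the n-th coefficient of a Cauchy product is that of the
   product of the truncations to degree [n], so the laws of [{poly F}]
   transfer to [fps F]. *)
Section FpsRing.
Variable F : fieldType.
Implicit Types (f g : fps F) (n : nat).

Definition trunc n f : {poly F} := \poly_(i < n.+1) f i.

Lemma coef_trunc n f i : (i <= n)%N -> (trunc n f)`_i = f i.
Proof. by move=> le_in; rewrite coef_poly ltnS le_in. Qed.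

Lemma fpsmul_trunc f g n : fpsmul f g n = (trunc n f * trunc n g)`_n.
Proof.
rewrite coefM; apply: eq_bigr => i _.
by rewrite !coef_trunc // ?leq_subr // -ltnS.
Qed.

Lemma trunc_mul f g n i : (i <= n)%N ->
  (trunc n (fpsmul f g))`_i = (trunc n f * trunc n g)`_i.
Proof.
move=> le_in; rewrite coef_trunc // fpsmul_trunc.
by apply: coefM_low => j le_ji; rewrite !coef_trunc // (leq_trans le_ji).
Qed.

Lemma trunc1 n : trunc n (fps1 F) = 1.
Proof. by apply/polyP => -[|i]; rewrite coef_poly coef1 //=; case: ifP. Qed.

Lemma fpsmulA : associative (@fpsmul F).
Proof.
move=> f g h; apply/funext=> n; rewrite !fpsmul_trunc.
transitivity ((trunc n f * trunc n g * trunc n h)`_n).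
  by rewrite -mulrA; apply: coefM_low => // i /trunc_mul.
by apply: coefM_low => // i /trunc_mul ->.
Qed.

Lemma fpsmulC : commutative (@fpsmul F).
Proof. by move=> f g; apply/funext=> n; rewrite !fpsmul_trunc mulrC. Qed.

Lemma fpsmul1 : left_id (fps1 F) (@fpsmul F).
Proof. by move=> f; apply/funext=> n; rewrite fpsmul_trunc trunc1 mul1r coef_trunc. Qed.

Lemma fpsmulDl : left_distributive (@fpsmul F) (@fpsadd F).
Proof.
move=> f g h; apply/funext=> n; rewrite /fpsmul /fpsadd -big_split /=.
by apply: eq_bigr => i _; rewrite mulrDl.
Qed.

Lemma fps1_neq0 : (fps1 F : fps F) != 0.
Proof. by apply/eqP => /(congr1 (fun f : fps F => f 0%N)) /eqP; rewrite oner_eq0. Qed.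

End FpsRing.

HB.instance Definition _ (F : fieldType) :=
  GRing.Zmodule_isComNzRing.Build (fps F)
    (@fpsmulA F) (@fpsmulC F) (@fpsmul1 F) (@fpsmulDl F) (@fps1_neq0 F).

Section Monomials.
Variable F : fieldType.
Implicit Types (f : fps F) (a c : F).

Lemma fpsmulE f g n : (f * g) n = \sum_(i < n.+1) f i * g (n - i)%N.
Proof. by []. Qed.

Lemma fpsmul_coef0 f g : (f * g) 0%N = f 0%N * g 0%N.
Proof. by rewrite fpsmulE big_ord1. Qed.

Definition mon c k : fps F := fun n => if n == k then c else 0.

Lemma mulmonE c k f n : (mon c k * f) n = if (k <= n)%N then c * f (n - k)%N else 0.
Proof.
rewrite fpsmulE /mon; case: leqP => [le_kn|lt_nk].
  rewrite (bigD1 (Ordinal (le_kn : (k < n.+1)%N))) //= eqxx big1 ?addr0 // => i ne_ik.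
  by rewrite ifN ?mul0r //; apply: contra ne_ik => /eqP eq_ik; apply/eqP/val_inj.
by rewrite big1 // => i _; rewrite ifN ?mul0r // neq_ltn (leq_trans (ltn_ord i)).
Qed.

Lemma mulmon a c i j : mon a i * mon c j = mon (a * c) (i + j)%N.
Proof.
apply/funext => n; rewrite mulmonE /mon; case: leqP => [le_in|lt_ni].
  by rewrite -{2}(subnKC le_in) eqn_add2l; case: eqP; rewrite ?mulr0.
by rewrite ifN // neq_ltn (leq_trans lt_ni (leq_addr _ _)).
Qed.

Lemma monN c k : mon (- c) k = - mon c k.
Proof.
apply/funext => n; change (mon (- c) k n = - mon c k n).
by rewrite /mon; case: (n == k); rewrite ?oppr0.
Qed.

Definition shift k f : fps F := fun n => f (n + k)%N.

Lemma shift_decomp k f : (forall i, (i < k)%N -> f i = 0) -> f = mon 1 k * shift k f.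
Proof.
move=> f_low; apply/funext => n; rewrite mulmonE /shift.
by case: leqP => [le_kn|/f_low //]; rewrite mul1r subnK.
Qed.

End Monomials.

(* Course-of-values recursion: if [step n v] only reads [v i] for [i < n], some
   sequence satisfies [v n = step n v] for all [n].  Its first [n] values are
   the list [cov_list x0 step n]. *)
Fixpoint cov_list (T : Type) (x0 : T) (step : nat -> (nat -> T) -> T) n : seq T :=
  if n is m.+1 then rcons (cov_list x0 step m) (step m (nth x0 (cov_list x0 step m)))
  else [::].

Lemma size_cov_list (T : Type) (x0 : T) step n : size (cov_list x0 step n) = n.
Proof. by elim: n => //= n IH; rewrite size_rcons IH. Qed.

Lemma nth_cov_list (T : Type) (x0 : T) step n d i : (i < n)%N ->
  nth x0 (cov_list x0 step (n + d)) i = nth x0 (cov_list x0 step n) i.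
Proof.
move=> lt_in; elim: d => [|d IH]; first by rewrite addn0.
by rewrite addnS /= nth_rcons size_cov_list (leq_trans lt_in (leq_addr _ _)).
Qed.

Lemma course_of_values (T : Type) (x0 : T) (step : nat -> (nat -> T) -> T) :
  (forall n v w, (forall i, (i < n)%N -> v i = w i) -> step n v = step n w) ->
  exists v : nat -> T, forall n, v n = step n v.
Proof.
move=> step_local; exists (fun n => nth x0 (cov_list x0 step n.+1) n) => n /=.
rewrite nth_rcons size_cov_list ltnn eqxx; apply: step_local => i lt_in.
by rewrite -(nth_cov_list x0 step (n - i.+1) (ltnSn i)) subnKC.
Qed.

Section UnitsAndSquareRoots.
Variable F : fieldType.

Lemma fps_inv_exists (r : fps F) : r 0%N != 0 -> exists t : fps F, t * r = 1.
Proof.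
move=> r0_neq0.
pose step n (v : nat -> F) := ((1 : fps F) n - \sum_(i < n) v i * r (n - i)%N) / r 0%N.
have [v v_step] : exists v, forall n, v n = step n v.
  apply: (course_of_values 0) => n v w eq_vw; congr ((_ - _) / _).
  by apply: eq_bigr => i _; rewrite eq_vw.
exists v; apply/funext => n; rewrite fpsmulE big_ord_recr /= subnn v_step mulfVK //.
by rewrite addrC subrK.
Qed.

Lemma fps_sqrt_exists (w : fps F) (c : F) : (2%:R : F) != 0 -> c != 0 ->
  w 0%N = c ^+ 2 -> exists r : fps F, r * r = w /\ r 0%N = c.
Proof.
move=> two_neq0 c_neq0 w0.
pose step n (v : nat -> F) :=
  if n is m.+1 then (w m.+1 - \sum_(i < m) v i.+1 * v (m - i)%N) / (c *+ 2) else c.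
have [v v_step] : exists v, forall n, v n = step n v.
  apply: (course_of_values 0) => -[|m] v v' eq_vv' //; congr ((_ - _) / _).
  by apply: eq_bigr => i _; rewrite !eq_vv' // ltnS ?leq_subr.
have v0 : v 0%N = c by rewrite v_step.
exists v; split => //; apply/funext => -[|m]; first by rewrite fpsmul_coef0 v0 w0 expr2.
rewrite fpsmulE big_ord_recl big_ord_recr /= subn0 subnn v0 (v_step m.+1) /=.
set s := \sum_(i < m) v i.+1 * v (m - i)%N.
by rewrite -mulr_natr; field; rewrite two_neq0 c_neq0.
Qed.

End UnitsAndSquareRoots.

Definition sgnb (R : nzRingType) (b : bool) : R := if b then -1 else 1.

Lemma sgnb_mul (R : nzRingType) b1 b2 : sgnb R (b1 (+) b2) = sgnb R b1 * sgnb R b2.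
Proof. by case: b1; case: b2; rewrite /= ?mulr1 ?mul1r ?mulrNN ?mulr1. Qed.

Lemma sgnb_sqr (R : nzRingType) b : sgnb R b * sgnb R b = 1.
Proof. by rewrite -sgnb_mul addbb. Qed.

Lemma sgnb_neq0 (R : nzRingType) b : sgnb R b != 0.
Proof. by case: b; rewrite /= ?oppr_eq0 oner_eq0. Qed.

Lemma sign_cases (R : nzRingType) (eps : R) :
  eps = 1 \/ eps = -1 <-> exists e, eps = sgnb R e.
Proof. by split=> [[->|->]|[[] ->]]; [exists false|exists true|right|left]. Qed.

Section EuclideanField.
Variable F : fieldType.
Hypothesis hF : euclidean F.

Lemma sqr_add_eq0 (c d : F) : c ^+ 2 + d ^+ 2 = 0 -> c = 0.
Proof.
move=> sum0; apply/eqP/negPn/negP => c_neq0.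
apply: (hF.1 [:: d / c]); rewrite big_seq1 expr_div_n.
apply: (mulIf (expf_neq0 2 c_neq0)); rewrite mulfVK ?expf_neq0 // mulN1r.
by apply/eqP; rewrite -addr_eq0 addrC sum0.
Qed.

Lemma two_neq0 : (2%:R : F) != 0.
Proof.
apply/eqP => two0.
have one0 : (1 : F) = 0 by apply: (@sqr_add_eq0 1 1); rewrite expr1n -mulr2n.
by move/eqP: (oner_neq0 F).
Qed.

Lemma signed_sqr (a : F) : a != 0 -> exists b (c : F), c != 0 /\ a = sgnb F b * c ^+ 2.
Proof.
move=> a_neq0; have [c a_sqr] := hF.2 a.
have c_neq0 : c != 0.
  by apply: contraNneq a_neq0 => c0; case: a_sqr => ->; rewrite c0 expr2 mul0r ?oppr0.
by case: a_sqr => ->; [exists false, c; rewrite mul1r|exists true, c; rewrite mulN1r].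
Qed.

Lemma signed_sqr_uniq b e (c d : F) : c != 0 ->
  sgnb F b * c ^+ 2 = sgnb F e * d ^+ 2 -> b = e.
Proof.
move=> c_neq0 eq_bcd; case: (eqVneq b e) => // ne_be.
have sgn_e : sgnb F e = - sgnb F b.
  by case: b e ne_be {eq_bcd} => -[] //= _; rewrite opprK.
move: eq_bcd; rewrite sgn_e mulNr -mulrN => /(mulfI (sgnb_neq0 F b)) c2_def.
suff c0 : c = 0 by rewrite c0 eqxx in c_neq0.
by apply: (@sqr_add_eq0 c d); rewrite c2_def addNr.
Qed.

End EuclideanField.
Section SignedOrder.
Variable F : fieldType.
Implicit Types (x : fps F) (b : bool) (k : nat).

Lemma has_val_uniq x k k' : has_val x k -> has_val x k' -> k = k'.
Proof.
move=> [x_low xk_neq0] [x_low' xk'_neq0].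
by case: (ltngtP k k') => // [/x_low'|/x_low].
Qed.

Lemma Phi_at_val (M : F -> Prop) n x k : has_val x k ->
  Phi M n x <-> [/\ odd k = odd n, (n <= k)%N & M (x k)].
Proof.
move=> val_k; split=> [[x0|[k' [val_k' odd_k' le_nk' M_xk']]]|[odd_k le_nk M_xk]].
- by case: val_k => _; rewrite x0.
- by rewrite (has_val_uniq val_k val_k').
- by right; exists k.
Qed.

Definition signed_order x b k : Prop :=
  has_val x k /\ exists2 c : F, c != 0 & x k = sgnb F b * c ^+ 2.

Lemma signed_order_mon b k : signed_order (mon (sgnb F b) k) b k.
Proof.
split; last by exists 1; rewrite ?oner_neq0 // /mon eqxx expr1n mulr1.
split=> [i lt_ik|]; rewrite /mon; first by rewrite ltn_eqF.
by rewrite eqxx; apply/eqP/sgnb_neq0.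
Qed.

Hypothesis hF : euclidean F.

Lemma signed_order_exists x : x <> 0 -> exists b k, signed_order x b k.
Proof.
move=> x_neq0; have x_nz : exists n, x n != 0.
  apply: contrapT => x_eq0; apply: x_neq0; apply/funext => n.
  by apply/eqP; apply: contrapT => xn_neq0; apply: x_eq0; exists n; apply/negP.
case: (ex_minnP x_nz) => k xk_neq0 k_min.
have [b [c [c_neq0 xk_def]]] := signed_sqr hF xk_neq0.
exists b, k; split; last by exists c.
split=> [i lt_ik|]; last exact/eqP.
by apply/eqP; apply: contraTT lt_ik => /k_min; rewrite -leqNgt.
Qed.

Lemma signed_order_factor x b k : signed_order x b k ->
  exists r t : fps F, t * r = 1 /\ x = r * r * mon (sgnb F b) k.
Proof.
move=> [[x_low xk_neq0] [c c_neq0 xk_def]].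
pose w := mon (sgnb F b) 0 * shift k x.
have w0 : w 0%N = c ^+ 2.
  by rewrite /w fpsmul_coef0 /mon /shift eqxx add0n xk_def mulrA sgnb_sqr mul1r.
have [r [r_sqr r0]] := fps_sqrt_exists (two_neq0 hF) c_neq0 w0.
have [t tr1] : exists t, t * r = 1 by apply: fps_inv_exists; rewrite r0.
exists r, t; split => //; rewrite r_sqr /w mulrAC mulmon sgnb_sqr.
exact: shift_decomp.
Qed.

End SignedOrder.

(* The signature of [Q] records which signed monomials [sgnb b * X^k] lie in [Q];
   by the normal form above it determines [Q] completely. *)
Definition signature (F : fieldType) (Q : fps F -> Prop) (b : bool) (k : nat) : bool :=
  `[< Q (mon (sgnb F b) k) >].

Section QuadraticModule.
Variables (F : fieldType) (Q : fps F -> Prop).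
Hypothesis hQ : quadratic_module Q.
Implicit Types (x g : fps F) (b : bool) (k : nat).

Lemma qmD x y : Q x -> Q y -> Q (x + y).
Proof. by case: hQ => QD _ _; apply: QD. Qed.

Lemma qmMsqr a x : Q x -> Q (a * a * x).
Proof. by case: hQ => _ QM _; apply: QM. Qed.

Lemma qm1 : Q 1.
Proof. by case: hQ. Qed.

Lemma qm0 : Q 0.
Proof. by have := qmMsqr 0 qm1; rewrite !mul0r. Qed.

Lemma qm_unit_sqr r t x : t * r = 1 -> Q (r * r * x) <-> Q x.
Proof.
move=> tr1; split=> [Qrrx|]; last exact: qmMsqr.
have -> : x = (t * r) * (t * r) * x by rewrite tr1 !mul1r.
by rewrite (_ : t * r * (t * r) * x = t * t * (r * r * x)); [apply: qmMsqr | ring].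
Qed.

Lemma signature_even k : ~~ odd k -> signature Q false k.
Proof.
move=> even_k; apply/asboolP; have := qmMsqr (mon 1 k./2) qm1.
by rewrite mulr1 mulmon mulr1 addnn -{2}(odd_double_half k) (negbTE even_k).
Qed.

Lemma signature_step b k : signature Q b k -> signature Q b k.+2.
Proof. by move/asboolP/(qmMsqr (mon 1 1)); rewrite !mulmon !mul1r => /asboolP. Qed.

Hypothesis hF : euclidean F.

(* If both [X^k] and [-X^k] lie in [Q], then so does all of [X^k * F[[X]]], since
   [g = ((g + 1)/2)^2 - ((g - 1)/2)^2]. *)
Lemma qm_full_level k : Q (mon 1 k) -> Q (mon (-1) k) -> forall g, Q (mon 1 k * g).
Proof.
move=> Qpos Qneg g.
have [h h2] : exists h : fps F, h * 2%:R = 1.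
  by apply: (@fps_inv_exists F 2%:R); exact: (two_neq0 hF).
suff -> : mon 1 k * g =
    h * (g + 1) * (h * (g + 1)) * mon 1 k + h * (g - 1) * (h * (g - 1)) * mon (-1) k.
  exact: qmD (qmMsqr _ Qpos) (qmMsqr _ Qneg).
transitivity (h * 2%:R * (h * 2%:R) * (mon 1 k * g)); first by rewrite h2 !mul1r.
by rewrite monN; ring.
Qed.

Lemma signature_full k : signature Q false k -> signature Q true k ->
  forall b k', (k <= k')%N -> signature Q b k'.
Proof.
move=> /asboolP Qpos /asboolP Qneg b k' le_kk'; apply/asboolP.
rewrite -(subnKC le_kk') -[sgnb F b]mul1r -mulmon.
exact: qm_full_level.
Qed.

Lemma qm_signed_order x b k : signed_order x b k -> Q x <-> signature Q b k.
Proof.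
move=> /(signed_order_factor hF) [r [t [tr1 ->]]].
by rewrite (qm_unit_sqr _ tr1); split=> /asboolP.
Qed.

End QuadraticModule.

Lemma or3E (P1 P2 P3 : Prop) : [\/ P1, P2 | P3] <-> P1 \/ P2 \/ P3.
Proof.
split=> [[] ?|[|[]] ?];
  by [left|right; left|right; right|apply: Or31|apply: Or32|apply: Or33].
Qed.

Lemma or4E (P1 P2 P3 P4 : Prop) : [\/ P1, P2, P3 | P4] <-> [\/ P1, P2 | P3 \/ P4].
Proof.
split=> [[] ?|[||[]] ?]; by [apply: Or31|apply: Or32|apply: Or33; left|apply: Or33; right
  |apply: Or41|apply: Or42|apply: Or43|apply: Or44].
Qed.

Section PhiPatterns.
Variable F : fieldType.
Hypothesis hF : euclidean F.
Implicit Types (x : fps F) (b e : bool) (k m n : nat).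

Lemma epsSqF_signed e b (c : F) : c != 0 ->
  epsSqF (sgnb F e) (sgnb F b * c ^+ 2) <-> b = e.
Proof. by move=> c_neq0; split=> [[d /(signed_sqr_uniq hF c_neq0)]|->]; last exists c. Qed.

Lemma sqF_signed b (c : F) : c != 0 -> sqF (sgnb F b * c ^+ 2) <-> ~~ b.
Proof.
move=> c_neq0; split=> [[d sq_d]|]; last by case: b => // _; exists c; rewrite mul1r.
by rewrite (@signed_sqr_uniq _ hF b false c d) //= mul1r.
Qed.

Lemma Phi_sq_part x b k : signed_order x b k -> Phi (@sqF F) 0 x <-> sq_part b k.
Proof.
move=> [val_k [c c_neq0 xk_def]]; rewrite (propext (Phi_at_val _ _ val_k)) xk_def.
rewrite (propext (sqF_signed b c_neq0)) /sq_part.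
by split=> [[-> _ ->]|/andP[/negbTE -> ->]].
Qed.

Lemma Phi_eps_part m e x b k : odd m -> signed_order x b k ->
  Phi (epsSqF (sgnb F e)) m x <-> eps_part m e b k.
Proof.
move=> odd_m [val_k [c c_neq0 xk_def]]; rewrite (propext (Phi_at_val _ _ val_k)) xk_def.
rewrite (propext (epsSqF_signed e b c_neq0)) /eps_part odd_m.
by split=> [[-> -> ->]|/and3P[-> -> /eqP->]]; rewrite ?eqxx.
Qed.

Lemma Phi_tail n x k : has_val x k ->
  Phi (@allF F) n x \/ Phi (@allF F) n.+1 x <-> (n <= k)%N.
Proof.
move=> val_k; rewrite !(propext (Phi_at_val _ _ val_k)).
split=> [[[_ le_nk _]|[_ lt_nk _]]|le_nk]; [by []|exact: ltnW|].
have [lt_nk|le_kn] := ltnP n k; last first.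
  have -> : k = n by apply/eqP; rewrite eqn_leq le_kn le_nk.
  by left.
case: (boolP (odd k == odd n)) => [/eqP odd_eq|odd_ne]; first by left.
by right; split=> //=; move: odd_ne; case: (odd k); case: (odd n).
Qed.

End PhiPatterns.

Section FormsAsPatterns.
Variables (F : fieldType) (Q : fps F -> Prop).
Hypothesis hF : euclidean F.
Hypothesis hQ : quadratic_module Q.

Lemma qm_pattern_iff (RHS : fps F -> Prop) (P : bool -> nat -> bool) :
  RHS 0 -> (forall x b k, signed_order x b k -> (RHS x <-> P b k)) ->
  (forall x, Q x <-> RHS x) <-> signature Q =2 P.
Proof.
move=> RHS0 RHS_P; split=> [Q_RHS b k|sig_P x].
  have mon_ord := signed_order_mon F b k.
  by apply/asboolP/idP => [/Q_RHS/(RHS_P _ _ _ mon_ord)|/(RHS_P _ _ _ mon_ord)/Q_RHS].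
have [->|x_neq0] := pselect (x = 0); first by split=> _; [apply: RHS0|apply: qm0].
have [b [k ord]] := signed_order_exists hF x_neq0.
by rewrite (propext (qm_signed_order hQ hF ord)) (propext (RHS_P _ _ _ ord)) sig_P.
Qed.

Lemma formA_iff : qm_formA Q <-> typeA (signature Q).
Proof. by apply: qm_pattern_iff => [|x b k /(Phi_sq_part hF)]; first left. Qed.

Lemma formB_iff : qm_formB Q <-> typeB (signature Q).
Proof.
rewrite /typeB -(propext (qm_pattern_iff (RHS := fun=> True) (P := patternB) _ _)) //.
by split=> Q_all x; [split|apply/Q_all].
Qed.

Lemma formC_iff : qm_formC Q <-> typeC (signature Q).
Proof.
have formC m e : odd m ->
    (forall x, Q x <-> Phi (@sqF F) 0 x \/ Phi (epsSqF (sgnb F e)) m x) <->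
    signature Q =2 patternC m e.
  move=> odd_m; apply: qm_pattern_iff => [|x b k ord]; first by left; left.
  rewrite (propext (Phi_sq_part hF ord)) (propext (Phi_eps_part hF e odd_m ord)).
  exact: (rwP orP).
split=> [[m [eps [_ odd_m /sign_cases[e ->] /(formC m e odd_m) sig_C]]]|].
  by exists m, e.
case=> [m [e [odd_m /(formC m e odd_m) Q_C]]]; exists m, (sgnb F e).
by split=> //; [exact: odd_gt0|apply/sign_cases; exists e].
Qed.

Lemma formD_iff : qm_formD Q <-> typeD (signature Q).
Proof.
have formD n :
    (forall x, Q x <-> [\/ Phi (@sqF F) 0 x, Phi (@allF F) n x | Phi (@allF F) n.+1 x]) <->
    signature Q =2 patternD n.
  apply: qm_pattern_iff => [|x b k ord]; first by apply: Or31; left.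
  rewrite (propext (or3E _ _ _)) (propext (Phi_sq_part hF ord)) (propext (Phi_tail n ord.1)).
  exact: (rwP orP).
by split=> -[n [n_gt0 /formD sig_D]]; exists n.
Qed.

Lemma formE_iff : qm_formE Q <-> typeE (signature Q).
Proof.
have formE m e n : odd m ->
    (forall x, Q x <-> [\/ Phi (@sqF F) 0 x, Phi (epsSqF (sgnb F e)) m x,
                         Phi (@allF F) n x | Phi (@allF F) n.+1 x]) <->
    signature Q =2 patternE m e n.
  move=> odd_m; apply: qm_pattern_iff => [|x b k ord]; first by apply: Or41; left.
  rewrite (propext (or4E _ _ _ _)) (propext (Phi_sq_part hF ord)).
  rewrite (propext (Phi_eps_part hF e odd_m ord)) (propext (Phi_tail n ord.1)).
  exact: (rwP or3P).
split=> [[eps [m [n [/sign_cases[e ->] [_ odd_m] _ lt_mn /(formE m e n odd_m) sig_E]]]]|].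
  by exists m, e, n.
case=> [m [e [n [odd_m lt_mn /(formE m e n odd_m) Q_E]]]]; exists (sgnb F e), m, n.
split=> //; first by apply/sign_cases; exists e.
  by rewrite odd_gt0.
exact: ltn_trans (odd_gt0 odd_m) lt_mn.
Qed.

(* Multiplicativity of the signature gives closure of [Q] under products. *)
Lemma qm_mul x y : Q x -> Q y -> Q (x * y).
Proof.
have [-> _ _|x_neq0] := pselect (x = 0); first by rewrite mul0r; apply: qm0.
have [-> _ _|y_neq0] := pselect (y = 0); first by rewrite mulr0; apply: qm0.
have [b1 [k1 ord1]] := signed_order_exists hF x_neq0.
have [b2 [k2 ord2]] := signed_order_exists hF y_neq0.
move=> /(qm_signed_order hQ hF ord1) S1 /(qm_signed_order hQ hF ord2) S2.
have := S_mul (signature_even hQ) (signature_step hQ) (signature_full hQ hF) S1 S2.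
move=> /asboolP; rewrite sgnb_mul -mulmon => Q_m12.
have [r1 [_ [_ ->]]] := signed_order_factor hF ord1.
have [r2 [_ [_ ->]]] := signed_order_factor hF ord2.
set m1 := mon _ k1; set m2 := mon _ k2.
suff -> : r1 * r1 * m1 * (r2 * r2 * m2) = r1 * r2 * (r1 * r2) * (m1 * m2).
  exact: qmMsqr.
ring.
Qed.

End FormsAsPatterns.

Theorem mainTheorem16 (F : fieldType) (hF : euclidean F) (Q : fps F -> Prop) :
  quadratic_module Q ->
  exactly_one5 (qm_formA Q) (qm_formB Q) (qm_formC Q) (qm_formD Q) (qm_formE Q)
  /\ preordering Q.
Proof.
move=> hQ; split; last by split=> // x y; apply: qm_mul.
rewrite (propext (formA_iff hF hQ)) (propext (formB_iff hF hQ)) (propext (formC_iff hF hQ)).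
rewrite (propext (formD_iff hF hQ)) (propext (formE_iff hF hQ)).
apply: admissible_exactly_one.
- exact: signature_even.
- exact: signature_step.
- exact: signature_full.
Qed.
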